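(* Let $T_1,T_2>0$ and $0<\tau<2\min(T_1,T_2)$. Let $R_1=\tau/\sqrt2$, $R_2=R_1+\tau$, $c_0=(T_1+\tau/2+R_1,\,T_2+\tau/2+R_1)$. For $p=(p_1,p_2)\in\mathbb{R}^2$ define the regions $S_{1,\alpha}=\{T_1+\tfrac\tau2<p_1<T_1+\tfrac\tau2+R_1,\ T_2+\tfrac\tau2<p_2<T_2+\tfrac\tau2+R_1,\ \|p-c_0\|<R_1\}$, $S_{1,1}=\{T_1+\tfrac\tau2<p_1<T_1+\tfrac\tau2+R_1,\ p_2>T_2+\tfrac\tau2+R_1\}$, $S_{1,2}=\{T_2+\tfrac\tau2<p_2<T_2+\tfrac\tau2+R_1,\ p_1>T_1+\tfrac\tau2+R_1\}$, $S_{1,3}=\{p_1>T_1+\tfrac\tau2+R_1,\ p_2>T_2+\tfrac\tau2+R_1\}$, $S_{0,\alpha}=\{p_1\le T_1+\tfrac\tau2+R_1,\ p_2\le T_2+\tfrac\tau2+R_1,\ \|p-c_0\|>R_2\}$, $S_{0,1}=\{p_1\le T_1-\tfrac\tau2,\ p_2>T_2+\tfrac\tau2+R_1\}$, $S_{0,2}=\{p_2\le T_2-\tfrac\tau2,\ p_1>T_1+\tfrac\tau2+R_1\}$, $S_{\tau,\alpha}=\{p_1\le T_1+\tfrac\tau2+R_1,\ p_2\le T_2+\tfrac\tau2+R_1,\ R_1\le\|p-c_0\|\le R_2\}$, $S_{\tau,1}=\{T_1-\tfrac\tau2\le p_1\le T_1+\tfrac\tau2,\ p_2>T_2+\tfrac\tau2+R_1\}$,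 $S_{\tau,2}=\{T_2-\tfrac\tau2\le p_2\le T_2+\tfrac\tau2,\ p_1>T_1+\tfrac\tau2+R_1\}$, and define $f_\tau(p)=1$ on $S_{1,\alpha}\cup S_{1,1}\cup S_{1,2}\cup S_{1,3}$, $f_\tau(p)=0$ on $S_{0,\alpha}\cup S_{0,1}\cup S_{0,2}$, $f_\tau(p)=\frac{R_2-\|p-c_0\|}{\tau}$ on $S_{\tau,\alpha}$, $f_\tau(p)=\frac{p_1-(T_1-\tau/2)}{\tau}$ on $S_{\tau,1}$, $f_\tau(p)=\frac{p_2-(T_2-\tau/2)}{\tau}$ on $S_{\tau,2}$. Then $f_\tau$ is $\frac1\tau$-Lipschitz with respect to the Euclidean norm: $|f_\tau(x)-f_\tau(x')|\le\frac1\tau\|x-x'\|$ for all $x,x'$ in the union of these regions.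
   Context: $\|\cdot\|$ is the Euclidean norm on $\mathbb{R}^2$. *)

From Stdlib Require Import Reals.
Open Scope R_scope.

Definition norm2 (p : R * R) : R := sqrt (fst p ^ 2 + snd p ^ 2).
Definition sub2 (p q : R * R) : R * R := (fst p - fst q, snd p - snd q).

Section Regions.
Variables (T1 T2 tau : R).
Definition R1 : R := tau / sqrt 2.
Definition R2 : R := R1 + tau.
Definition c0 : R * R := (T1 + tau / 2 + R1, T2 + tau / 2 + R1).

Definition S1a (p : R * R) : Prop :=
  T1 + tau/2 < fst p < T1 + tau/2 + R1 /\ T2 + tau/2 < snd p < T2 + tau/2 + R1
  /\ norm2 (sub2 p c0) < R1.
Definition S11 (p : R * R) : Prop :=
  T1 + tau/2 < fst p < T1 + tau/2 + R1 /\ snd p > T2 + tau/2 + R1.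
Definition S12 (p : R * R) : Prop :=
  T2 + tau/2 < snd p < T2 + tau/2 + R1 /\ fst p > T1 + tau/2 + R1.
Definition S13 (p : R * R) : Prop :=
  fst p > T1 + tau/2 + R1 /\ snd p > T2 + tau/2 + R1.
Definition S0a (p : R * R) : Prop :=
  fst p <= T1 + tau/2 + R1 /\ snd p <= T2 + tau/2 + R1 /\ norm2 (sub2 p c0) > R2.
Definition S01 (p : R * R) : Prop :=
  fst p <= T1 - tau/2 /\ snd p > T2 + tau/2 + R1.
Definition S02 (p : R * R) : Prop :=
  snd p <= T2 - tau/2 /\ fst p > T1 + tau/2 + R1.
Definition Sta (p : R * R) : Prop :=
  fst p <= T1 + tau/2 + R1 /\ snd p <= T2 + tau/2 + R1
  /\ R1 <= norm2 (sub2 p c0) <= R2.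
Definition St1 (p : R * R) : Prop :=
  T1 - tau/2 <= fst p <= T1 + tau/2 /\ snd p > T2 + tau/2 + R1.
Definition St2 (p : R * R) : Prop :=
  T2 - tau/2 <= snd p <= T2 + tau/2 /\ fst p > T1 + tau/2 + R1.

Definition Sall (p : R * R) : Prop :=
  S1a p \/ S11 p \/ S12 p \/ S13 p \/ S0a p \/ S01 p \/ S02 p
  \/ Sta p \/ St1 p \/ St2 p.

Definition is_f_tau (f : R * R -> R) : Prop :=
  (forall p, S1a p \/ S11 p \/ S12 p \/ S13 p -> f p = 1) /\
  (forall p, S0a p \/ S01 p \/ S02 p -> f p = 0) /\
  (forall p, Sta p -> f p = (R2 - norm2 (sub2 p c0)) / tau) /\
  (forall p, St1 p -> f p = (fst p - (T1 - tau/2)) / tau) /\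
  (forall p, St2 p -> f p = (snd p - (T2 - tau/2)) / tau).
End Regions.

(** f_tau equals [clamp01 ((R2 - d(p)) / tau)], where d(p) is the Euclidean distance
    from p to the closed quadrant [[c0_1, +oo) x [c0_2, +oo)]: on each of the ten regions
    d(p) is either [||p - c0||], [c0_1 - p_1], [c0_2 - p_2] or 0, and the clamp reproduces
    the prescribed value.  A distance function is 1-Lipschitz and the clamp is 1-Lipschitz,
    so f_tau is (1/tau)-Lipschitz. *)

From Pilot Require Import Defs.
From Stdlib Require Import Reals Rgeom Lra Psatz.
Open Scope R_scope.

Lemma norm2_sub2_dist_euc (x y : R * R) :
  norm2 (sub2 x y) = dist_euc (fst x) (snd x) (fst y) (snd y).
Proof. unfold norm2, sub2, dist_euc, Rsqr; simpl; f_equal; ring. Qed.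

Lemma norm2_sub2_triangle (x y z : R * R) :
  norm2 (sub2 x z) <= norm2 (sub2 x y) + norm2 (sub2 y z).
Proof. rewrite !norm2_sub2_dist_euc; apply triangle. Qed.

Lemma norm2_sub2_0 (u : R * R) : norm2 (sub2 u (0, 0)) = norm2 u.
Proof. unfold norm2, sub2; simpl; f_equal; ring. Qed.

Lemma norm2_Rabs_sub_le (u v : R * R) : Rabs (norm2 u - norm2 v) <= norm2 (sub2 u v).
Proof.
  rewrite <- (norm2_sub2_0 u), <- (norm2_sub2_0 v).
  pose proof (norm2_sub2_triangle u v (0, 0)).
  pose proof (norm2_sub2_triangle v u (0, 0)).
  assert (norm2 (sub2 v u) = norm2 (sub2 u v)) by (unfold norm2, sub2; simpl; f_equal; ring).
  unfold Rabs; destruct Rcase_abs; lra.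
Qed.

Lemma norm2_le_compat (u v : R * R) :
  Rabs (fst u) <= Rabs (fst v) -> Rabs (snd u) <= Rabs (snd v) -> norm2 u <= norm2 v.
Proof.
  intros H1 H2; unfold norm2; apply sqrt_le_1_alt.
  rewrite <- (pow2_abs (fst u)), <- (pow2_abs (fst v)),
          <- (pow2_abs (snd u)), <- (pow2_abs (snd v)).
  pose proof (Rabs_pos (fst u)); pose proof (Rabs_pos (snd u)); nra.
Qed.

Lemma norm2_axis (a : R) : 0 <= a -> norm2 (a, 0) = a /\ norm2 (0, a) = a.
Proof.
  intros Ha; unfold norm2; cbn [fst snd].
  replace (a ^ 2 + 0 ^ 2) with (a ^ 2) by ring.
  replace (0 ^ 2 + a ^ 2) with (a ^ 2) by ring.
  rewrite sqrt_pow2 by exact Ha; split; reflexivity.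
Qed.

Lemma Rmax_Rabs_sub_le (a s t : R) : Rabs (Rmax a s - Rmax a t) <= Rabs (s - t).
Proof. unfold Rmax; repeat destruct Rle_dec; unfold Rabs; repeat destruct Rcase_abs; lra. Qed.

Lemma Rmin_Rabs_sub_le (a s t : R) : Rabs (Rmin a s - Rmin a t) <= Rabs (s - t).
Proof. unfold Rmin; repeat destruct Rle_dec; unfold Rabs; repeat destruct Rcase_abs; lra. Qed.

Definition clamp01 (t : R) : R := Rmax 0 (Rmin 1 t).

Lemma clamp01_Rabs_sub_le (s t : R) : Rabs (clamp01 s - clamp01 t) <= Rabs (s - t).
Proof.
  eapply Rle_trans; [apply Rmax_Rabs_sub_le | apply Rmin_Rabs_sub_le].
Qed.

Section ClampDiv.
Variable tau : R.
Hypothesis tau_pos : 0 < tau.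

Lemma clamp01_div_ge (a : R) : tau <= a -> clamp01 (a / tau) = 1.
Proof.
  intros Ha; assert (a / tau * tau = a) by (field; lra).
  unfold clamp01, Rmax, Rmin; repeat destruct Rle_dec; nra.
Qed.

Lemma clamp01_div_le0 (a : R) : a <= 0 -> clamp01 (a / tau) = 0.
Proof.
  intros Ha; assert (a / tau * tau = a) by (field; lra).
  unfold clamp01, Rmax, Rmin; repeat destruct Rle_dec; nra.
Qed.

Lemma clamp01_div_id (a : R) : 0 <= a <= tau -> clamp01 (a / tau) = a / tau.
Proof.
  intros Ha; assert (a / tau * tau = a) by (field; lra).
  unfold clamp01, Rmax, Rmin; repeat destruct Rle_dec; nra.
Qed.

Lemma clamp01_div_Rabs_sub_le (a s t : R) :
  Rabs (clamp01 ((a - s) / tau) - clamp01 ((a - t) / tau)) <= / tau * Rabs (s - t).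
Proof.
  eapply Rle_trans; [apply clamp01_Rabs_sub_le|].
  replace ((a - s) / tau - (a - t) / tau) with (/ tau * (t - s)) by (field; lra).
  rewrite Rabs_mult, Rabs_right, Rabs_minus_sym by (left; apply Rinv_0_lt_compat, tau_pos).
  apply Rle_refl.
Qed.

End ClampDiv.

Definition quadrant_dist (c p : R * R) : R :=
  norm2 (Rmax 0 (fst c - fst p), Rmax 0 (snd c - snd p)).

Lemma quadrant_dist_Rabs_sub_le (c x y : R * R) :
  Rabs (quadrant_dist c x - quadrant_dist c y) <= norm2 (sub2 x y).
Proof.
  eapply Rle_trans; [apply norm2_Rabs_sub_le|].
  apply norm2_le_compat; simpl; (eapply Rle_trans; [apply Rmax_Rabs_sub_le|]);
    rewrite <- Rabs_Ropp; right; f_equal; ring.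
Qed.

Section QuadrantDistValues.
Variables (c p : R * R).

Lemma quadrant_dist_sw :
  fst p <= fst c -> snd p <= snd c -> quadrant_dist c p = norm2 (sub2 p c).
Proof.
  intros; unfold quadrant_dist, norm2, sub2; simpl.
  rewrite !Rmax_right by lra; f_equal; ring.
Qed.

Lemma quadrant_dist_nw : fst p <= fst c -> snd c <= snd p -> quadrant_dist c p = fst c - fst p.
Proof.
  intros; unfold quadrant_dist.
  rewrite Rmax_right, (Rmax_left 0 (snd c - snd p)) by lra.
  apply norm2_axis; lra.
Qed.

Lemma quadrant_dist_se : fst c <= fst p -> snd p <= snd c -> quadrant_dist c p = snd c - snd p.
Proof.
  intros; unfold quadrant_dist.
  rewrite Rmax_left, (Rmax_right 0 (snd c - snd p)) by lra.
  apply norm2_axis; lra.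
Qed.

Lemma quadrant_dist_ne : fst c <= fst p -> snd c <= snd p -> quadrant_dist c p = 0.
Proof.
  intros; unfold quadrant_dist.
  rewrite !Rmax_left by lra.
  apply (norm2_axis 0); lra.
Qed.

End QuadrantDistValues.

Lemma is_f_tau_clamp01 {T1 T2 tau : R} {f : R * R -> R} {p : R * R} :
  0 < tau -> is_f_tau T1 T2 tau f -> Sall T1 T2 tau p ->
  f p = clamp01 ((Defs.R2 tau - quadrant_dist (c0 T1 T2 tau) p) / tau).
Proof.
  intros Htau [F1 [F0 [Fa [Ft1 Ft2]]]] Hp.
  assert (R1_pos : 0 < Defs.R1 tau) by (apply Rdiv_lt_0_compat, sqrt_lt_R0; lra).
  assert (R2_eq : Defs.R2 tau = Defs.R1 tau + tau) by reflexivity.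
  destruct Hp as [H|[H|[H|[H|[H|[H|[H|[H|[H|H]]]]]]]]];
    first [ rewrite F1 by tauto | rewrite F0 by tauto | rewrite Fa by exact H
          | rewrite Ft1 by exact H | rewrite Ft2 by exact H ];
    unfold S1a, S11, S12, S13, S0a, S01, S02, Sta, St1, St2, c0 in *; cbn [fst snd] in *.
  - rewrite quadrant_dist_sw by (cbn [fst snd]; lra).
    symmetry; apply clamp01_div_ge; lra.
  - rewrite quadrant_dist_nw by (cbn [fst snd]; lra).
    symmetry; apply clamp01_div_ge; cbn [fst snd]; lra.
  - rewrite quadrant_dist_se by (cbn [fst snd]; lra).
    symmetry; apply clamp01_div_ge; cbn [fst snd]; lra.
  - rewrite quadrant_dist_ne by (cbn [fst snd]; lra).
    symmetry; apply clamp01_div_ge; lra.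
  - rewrite quadrant_dist_sw by (cbn [fst snd]; lra).
    symmetry; apply clamp01_div_le0; lra.
  - rewrite quadrant_dist_nw by (cbn [fst snd]; lra).
    symmetry; apply clamp01_div_le0; cbn [fst snd]; lra.
  - rewrite quadrant_dist_se by (cbn [fst snd]; lra).
    symmetry; apply clamp01_div_le0; cbn [fst snd]; lra.
  - rewrite quadrant_dist_sw by (cbn [fst snd]; lra).
    symmetry; apply clamp01_div_id; lra.
  - rewrite quadrant_dist_nw by (cbn [fst snd]; lra); cbn [fst snd].
    rewrite clamp01_div_id by lra; f_equal; lra.
  - rewrite quadrant_dist_se by (cbn [fst snd]; lra); cbn [fst snd].
    rewrite clamp01_div_id by lra; f_equal; lra.
Qed.

Theorem mainTheorem9 (T1 T2 tau : R) (f : R * R -> R) :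
  0 < T1 -> 0 < T2 -> 0 < tau -> tau < 2 * Rmin T1 T2 ->
  is_f_tau T1 T2 tau f ->
  forall x x' : R * R, Sall T1 T2 tau x -> Sall T1 T2 tau x' ->
    Rabs (f x - f x') <= / tau * norm2 (sub2 x x').
Proof.
  intros _ _ Htau _ Hf x x' Hx Hx'.
  rewrite (is_f_tau_clamp01 Htau Hf Hx), (is_f_tau_clamp01 Htau Hf Hx').
  eapply Rle_trans; [apply clamp01_div_Rabs_sub_le, Htau|].
  apply Rmult_le_compat_l; [left; apply Rinv_0_lt_compat, Htau|].
  apply quadrant_dist_Rabs_sub_le.
Qed.
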